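(* Let $n$ be a positive multiple of $4$, $\gamma\in\mathbb{R}$, $|\chi(\gamma)\rangle=\left(\cos(\gamma/4)|0\rangle^{\otimes4}+\sin(\gamma/4)|1\rangle^{\otimes 4}\right)^{\otimes n/4}$ and $\rho_\gamma=|\chi(\gamma)\rangle\langle\chi(\gamma)|$. Define $N_0=1$, $N_2(\gamma)=N_6(\gamma)=4\cos^2(\gamma/2)$, $N_4(\gamma)=6+8\sin^2(\gamma/2)$, $N_8=1$. Then for $\alpha\in\{0,\dots,2n\}$, $$\mathcal{P}_\alpha(\rho_\gamma)=\frac{1}{2^n}\sum_{\substack{i_0,i_2,i_4,i_6,i_8\ge0\\ i_0+i_2+i_4+i_6+i_8=n/4\\ 2i_2+4i_4+6i_6+8i_8=\alpha}}\frac{(n/4)!}{i_0!\,i_2!\,i_4!\,i_6!\,i_8!}\,N_2(\gamma)^{i_2}N_4(\gamma)^{i_4}N_6(\gamma)^{i_6}N_8^{i_8}.$$ In particular $\mathcal{P}_\alpha(\rho_\gamma)=0$ for odd $\alpha$.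
   Context: On $\mathcal{H}=(\mathbb{C}^2)^{\otimes n}$ define the Majorana operators $c_{2j-1}=Z^{\otimes(j-1)}\otimes X\otimes\mathbb{1}^{\otimes(n-j)}$ and $c_{2j}=Z^{\otimes(j-1)}\otimes Y\otimes\mathbb{1}^{\otimes(n-j)}$ for $j=1,\dots,n$. For $\alpha=0,\dots,2n$, $\mathcal{L}_\alpha\subseteq\mathcal{L}(\mathcal{H})$ is the span of the products $c_{i_1}\cdots c_{i_\alpha}$ with $1\le i_1<\dots<i_\alpha\le 2n$. The orthonormal basis used consists of the Hermitian Pauli strings (up to sign) in $\mathcal{L}_\alpha$ divided by $\sqrt{2^n}$, and $\mathcal{P}_\alpha(\rho)=\sum_\mu\mathrm{Tr}[B^\mu\rho]^2$ over this basis. *)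

From HB Require Import structures.
From mathcomp Require Import all_boot all_order all_algebra.
From mathcomp Require Import boolp reals trigo complex.
Set Implicit Arguments. Unset Strict Implicit. Unset Printing Implicit Defensive.
Import Order.TTheory GRing.Theory Num.Theory.
Local Open Scope ring_scope.
Local Open Scope complex_scope.

Section Defs.
Variable R : realType.

(* Computational basis of (C^2)^{\otimes n} indexed by x : 'I_(2^n);
   qubit j (0-based, j = 0 is the leftmost tensor factor) of basis state x
   is the bit of x at position n-1-j (most significant bit first). *)
Definition qbit (n j : nat) (x : nat) : bool := odd (x %/ 2 ^ (n - j.+1)).

(* Single-qubit Paulis, coded by 'I_4 : 0 = 1, 1 = X, 2 = Y, 3 = Z.
   Entry (r, c) with r, c the row/column bit. *)
Definition pauli1 (a : 'I_4) (r c : bool) : R[i] :=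
  match val a with
  | 0 => if r == c then 1 else 0
  | 1 => if r == c then 0 else 1
  | 2 => if r == c then 0 else if r then 'i else - 'i
  | _ => if r == c then (if r then -1 else 1) else 0
  end.

Definition pauli_mx (n : nat) (p : {ffun 'I_n -> 'I_4}) : 'M[R[i]]_(2 ^ n) :=
  \matrix_(r, c) \prod_(j < n) pauli1 (p j) (qbit n j r) (qbit n j c).

Definition PI : 'I_4 := inord 0.
Definition PX : 'I_4 := inord 1.
Definition PY : 'I_4 := inord 2.
Definition PZ : 'I_4 := inord 3.

(* Majorana operators, 0-based: for k : 'I_(2n) with j = k / 2,
   k even  <-> c_{2j+1} (1-based, X at qubit j),
   k odd   <-> c_{2j+2} (1-based, Y at qubit j);
   Z on qubits < j, identity on qubits > j. *)
Definition majorana (n : nat) (k : 'I_(2 * n)) : 'M[R[i]]_(2 ^ n) :=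
  pauli_mx [ffun i : 'I_n =>
              if (i < k./2)%N then PZ
              else if (i == k./2 :> nat) then (if odd k then PY else PX)
              else PI].

(* The ordered product c_{i_1} ... c_{i_a} with i_1 < ... < i_a the
   elements of S (enum S lists them in increasing order). *)
Definition majorana_prod (n : nat) (S : {set 'I_(2 * n)}) : 'M[R[i]]_(2 ^ n) :=
  foldr (fun k M => majorana k *m M) 1%:M (enum S).

Definition in_L (n alpha : nat) (M : 'M[R[i]]_(2 ^ n)) : Prop :=
  exists a : {set 'I_(2 * n)} -> R[i],
    M = \sum_(S : {set 'I_(2 * n)} | #|S| == alpha) a S *: majorana_prod S.

Definition basis_el (n : nat) (p : {ffun 'I_n -> 'I_4}) : 'M[R[i]]_(2 ^ n) :=
  ((Num.sqrt (2 ^+ n : R))^-1)%:C *: pauli_mx p.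

Definition P_alpha (n alpha : nat) (rho : 'M[R[i]]_(2 ^ n)) : R[i] :=
  \sum_(p : {ffun 'I_n -> 'I_4} | `[< in_L alpha (pauli_mx p) >])
     (\tr (basis_el p *m rho)) ^+ 2.

Definition block_amp (g : R) (b0 b1 b2 b3 : bool) : R :=
  if ~~ b0 && ~~ b1 && ~~ b2 && ~~ b3 then cos (g / 4)
  else if b0 && b1 && b2 && b3 then sin (g / 4) else 0.

Definition chi (n : nat) (g : R) : 'cV[R[i]]_(2 ^ n) :=
  \col_x (\prod_(b < n %/ 4)
            block_amp g (qbit n (4 * b) x) (qbit n (4 * b + 1) x)
                        (qbit n (4 * b + 2) x) (qbit n (4 * b + 3) x))%:C.

Definition rho (n : nat) (g : R) : 'M[R[i]]_(2 ^ n) :=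
  chi n g *m map_mx (fun z => z^*) (chi n g)^T.

Definition N2 (g : R) : R := 4 * cos (g / 2) ^+ 2.
Definition N4 (g : R) : R := 6 + 8 * sin (g / 2) ^+ 2.
Definition N6 (g : R) : R := 4 * cos (g / 2) ^+ 2.

Definition P_formula (n alpha : nat) (g : R) : R :=
  let m := (n %/ 4)%N in
  (2 ^+ n : R)^-1 *
  \sum_(i0 < m.+1) \sum_(i2 < m.+1) \sum_(i4 < m.+1) \sum_(i6 < m.+1)
  \sum_(i8 < m.+1 | (i0 + i2 + i4 + i6 + i8 == m)%N &&
                    (2 * i2 + 4 * i4 + 6 * i6 + 8 * i8 == alpha)%N)
     ((m`!)%:R / ((i0`! * i2`! * i4`! * i6`! * i8`!)%N)%:R
      * N2 g ^+ i2 * N4 g ^+ i4 * N6 g ^+ i6 * 1 ^+ i8).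

End Defs.

(* Under the Jordan-Wigner correspondence a Majorana monomial c_S is, up to a nonzero
   phase, the Pauli string [jw_string S], and S |-> [jw_string S] is a bijection onto Pauli
   strings (inverse [jw_support]).  Hence a Pauli string P lies in L_alpha iff
   |jw_support P| = alpha, and P_alpha(rho) = 2^-n * sum of Tr[P rho]^2 over those P.
   For the product state rho the trace factorises over the n/4 blocks, and a string with
   nonzero expectation carries X or Y either on all four qubits of a block or on none, so
   Jordan-Wigner strings never reach across blocks and the Majorana degree is the sum of the
   block degrees.  Thus P_alpha(rho) is 2^-n times the coefficient of X^alpha in Q^(n/4),
   where Q = sum over four-qubit Paulis q of <q>^2 X^(deg q) = 1 + N2 X^2 + N4 X^4 + N6 X^6 + X^8,
   and the multinomial theorem gives the formula. *)

From HB Require Import structures.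
From mathcomp Require Import all_boot all_order all_algebra.
From mathcomp Require Import boolp reals trigo complex.
From mathcomp Require Import ring lra zify.
Import Order.TTheory GRing.Theory Num.Theory.
Local Open Scope ring_scope.
Local Open Scope complex_scope.
Set Implicit Arguments. Unset Strict Implicit. Unset Printing Implicit Defensive.

Definition qubits (n : nat) (x : 'I_(2 ^ n)) : {ffun 'I_n -> bool} :=
  [ffun j : 'I_n => qbit n j x].

Lemma binary_digits_inj n x y : (x < 2 ^ n)%N -> (y < 2 ^ n)%N ->
  (forall k, (k < n)%N -> odd (x %/ 2 ^ k) = odd (y %/ 2 ^ k)) -> x = y.
Proof.
elim: n x y => [|n IHn] x y.
  by rewrite expn0 !ltnS !leqn0 => /eqP-> /eqP->.
rewrite expnS => ltx lty eq_digits.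
have eq_half : x./2 = y./2.
  apply: IHn; [lia | lia | move=> k ltk].
  by have := eq_digits k.+1 ltk; rewrite expnS !divnMA !divn2.
have := eq_digits 0%N isT; rewrite !expn0 !divn1 => eq_odd.
by rewrite -[x]odd_double_half -[y]odd_double_half eq_odd eq_half.
Qed.

Lemma qubits_inj n : injective (@qubits n).
Proof.
move=> x y /ffunP eq_xy; apply/val_inj/(@binary_digits_inj n);
  [exact: ltn_ord | exact: ltn_ord | move=> k ltk].
have ltj : (n - k.+1 < n)%N by lia.
have := eq_xy (Ordinal ltj); rewrite !ffunE /qbit /=.
by have -> : (n - (n - k.+1).+1 = k)%N by lia.
Qed.

Lemma qubits_bij n : bijective (@qubits n).
Proof.
apply: inj_card_bij; first exact: qubits_inj.
by rewrite card_ffun card_bool !card_ord.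
Qed.

Lemma sum_qubits (V : nmodType) n (F : {ffun 'I_n -> bool} -> V) :
  \sum_(x : 'I_(2 ^ n)) F (qubits x) = \sum_v F v.
Proof. by rewrite (reindex (@qubits n)) //; apply/onW_bij/qubits_bij. Qed.

(** * Pauli strings *)

Definition pI : 'I_4 := @Ordinal 4 0 isT.
Definition pX : 'I_4 := @Ordinal 4 1 isT.
Definition pY : 'I_4 := @Ordinal 4 2 isT.
Definition pZ : 'I_4 := @Ordinal 4 3 isT.

(* Symplectic coordinates: up to a phase, the Pauli coded by [a] is X^(xbit a) Z^(zbit a). *)
Definition xbit (a : 'I_4) : bool := (val a == 1%N) || (val a == 2%N).
Definition zbit (a : 'I_4) : bool := (val a == 2%N) || (val a == 3%N).
Definition pauli_xz (x z : bool) : 'I_4 :=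
  if x then (if z then pY else pX) else (if z then pZ else pI).
Definition xor_pauli (a b : 'I_4) : 'I_4 :=
  pauli_xz (xbit a (+) xbit b) (zbit a (+) zbit b).

Lemma pauli_xzK a : pauli_xz (xbit a) (zbit a) = a.
Proof. by case: a => [[|[|[|[|?]]]] ?] //; apply: val_inj. Qed.
Lemma xbit_pauli_xz x z : xbit (pauli_xz x z) = x. Proof. by case: x; case: z. Qed.
Lemma zbit_pauli_xz x z : zbit (pauli_xz x z) = z. Proof. by case: x; case: z. Qed.

Lemma xor_pauli_eqI a b : (xor_pauli a b == pI) = (a == b).
Proof. by case: a => [[|[|[|[|?]]]] ?] //; case: b => [[|[|[|[|?]]]] ?]. Qed.

Definition xor_string n (p q : {ffun 'I_n -> 'I_4}) : {ffun 'I_n -> 'I_4} :=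
  [ffun j => xor_pauli (p j) (q j)].

Section PauliAlgebra.
Variable R : realType.
Local Notation C := R[i].

Definition pauli_phase (a b : 'I_4) : C :=
  match val a, val b with
  | 1, 2 => 'i | 2, 1 => - 'i | 2, 3 => 'i | 3, 2 => - 'i
  | 3, 1 => 'i | 1, 3 => - 'i | _, _ => 1 end.

Lemma pauli1_mul (a b : 'I_4) (r c : bool) :
  \sum_(k : bool) pauli1 R a r k * pauli1 R b k c =
  pauli_phase a b * pauli1 R (xor_pauli a b) r c.
Proof.
rewrite big_bool.
case: a => [[|[|[|[|?]]]] ?] //; case: b => [[|[|[|[|?]]]] ?] //;
  case: r; case: c; rewrite /pauli1 /pauli_phase /xor_pauli /xbit /zbit /=;
  apply/eqP; rewrite eq_complex /=; apply/andP; split; apply/eqP; ring.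
Qed.

Lemma pauli_phase_neq0 a b : pauli_phase a b != 0.
Proof.
have i_neq0 : ('i : C) != 0 by rewrite eq_complex /= oner_eq0 andbF.
case: a => [[|[|[|[|?]]]] ?] //; case: b => [[|[|[|[|?]]]] ?] //;
  by rewrite /pauli_phase /= ?oppr_eq0 ?oner_eq0 ?i_neq0.
Qed.

Lemma pauli_phase_diag a : pauli_phase a a = 1.
Proof. by case: a => [[|[|[|[|?]]]] ?]. Qed.

Lemma pauli_mxE n p r c :
  pauli_mx R p r c = \prod_(j < n) pauli1 R (p j) (qubits r j) (qubits c j).
Proof. by rewrite mxE; apply: eq_bigr => j _; rewrite !ffunE. Qed.

Lemma pauli_mx_mul n (p q : {ffun 'I_n -> 'I_4}) :
  pauli_mx R p *m pauli_mx R q =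
  (\prod_(j < n) pauli_phase (p j) (q j)) *: pauli_mx R (xor_string p q).
Proof.
apply/matrixP => r c; rewrite [LHS]mxE [RHS]mxE.
under eq_bigr => k _ do rewrite !pauli_mxE -big_split /=.
rewrite (sum_qubits (fun v => \prod_(j < n)
  (pauli1 R (p j) (qubits r j) (v j) * pauli1 R (q j) (v j) (qubits c j)))).
rewrite -(bigA_distr_bigA (fun j b =>
  pauli1 R (p j) (qubits r j) b * pauli1 R (q j) b (qubits c j))) /=.
under eq_bigr => j _ do rewrite pauli1_mul.
rewrite big_split /= pauli_mxE; congr (_ * _).
by apply: eq_bigr => j _; rewrite [xor_string _ _ _]ffunE.
Qed.

Lemma mxtrace_pauli n (p : {ffun 'I_n -> 'I_4}) :
  \tr (pauli_mx R p) = \prod_(j < n) (if p j == pI then 2 else 0).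
Proof.
rewrite /mxtrace; under eq_bigr => k _ do rewrite pauli_mxE.
rewrite (sum_qubits (fun v => \prod_(j < n) pauli1 R (p j) (v j) (v j))).
rewrite -(bigA_distr_bigA (fun j b => pauli1 R (p j) b b)) /=.
apply: eq_bigr => j _; rewrite big_bool.
by case: (p j) => [[|[|[|[|?]]]] ?] //=; rewrite /pauli1 /=; ring.
Qed.

Lemma pauli_mx_const_I n : pauli_mx R [ffun _ : 'I_n => pI] = 1%:M.
Proof.
apply/matrixP => r c; rewrite pauli_mxE mxE.
have [->|neq_rc] := eqVneq r c.
  by apply: big1 => j _; rewrite ffunE /pauli1 /= eqxx.
have /existsP [j neq_j] : [exists j, qubits r j != qubits c j].
  rewrite -negb_forall; apply: contra neq_rc => /forallP eq_rc.
  by apply/eqP/qubits_inj/ffunP => j; apply/eqP.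
by rewrite (bigD1 j) //= ffunE /pauli1 /= (negbTE neq_j) mul0r.
Qed.

Lemma mxtrace_pauli_mul n (p q : {ffun 'I_n -> 'I_4}) :
  \tr (pauli_mx R p *m pauli_mx R q) = if p == q then 2 ^+ n else 0.
Proof.
rewrite pauli_mx_mul mxtraceZ mxtrace_pauli.
have [->|neq_pq] := eqVneq p q.
  rewrite big1 ?mul1r => [|j _]; last exact: pauli_phase_diag.
  rewrite (eq_bigr (fun _ => 2)) ?prodr_const ?card_ord // => j _.
  by rewrite ffunE xor_pauli_eqI eqxx.
have /existsP [j neq_j] : [exists j, p j != q j].
  rewrite -negb_forall; apply: contra neq_pq => /forallP eq_pq.
  by apply/eqP/ffunP => j; apply/eqP.
by rewrite [X in _ * X](bigD1 j) //= ffunE xor_pauli_eqI (negbTE neq_j) mul0r mulr0.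
Qed.

End PauliAlgebra.

(** * The Jordan-Wigner correspondence *)

Definition majorana_string n (k : 'I_(2 * n)) : {ffun 'I_n -> 'I_4} :=
  [ffun i : 'I_n =>
     if (i < k./2)%N then PZ
     else if (i == k./2 :> nat) then (if odd k then PY else PX)
     else PI].

(* Up to phase, the Pauli string of the Majorana monomial c_k1 ... c_kr, s = [:: k1; ...; kr]. *)
Definition jw_string n (s : seq 'I_(2 * n)) : {ffun 'I_n -> 'I_4} :=
  [ffun j : 'I_n =>
     pauli_xz (odd (count (fun k : 'I_(2 * n) => k./2 == j) s))
              (odd (count (fun k : 'I_(2 * n) => j.*2.+1 <= k)%N s))].

Lemma xbit_majorana_string n (k : 'I_(2 * n)) j :
  xbit (majorana_string k j) = (k./2 == j).
Proof.
have [vX vY vZ vI] : [/\ val PX = 1, val PY = 2, val PZ = 3 & val PI = 0]%N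
  by split; exact: inordK.
rewrite ffunE /xbit; case: ifP => lt_j; first (rewrite vZ /=; lia).
case: ifP => eq_j; first by case: (odd k); rewrite ?vY ?vX /=; lia.
rewrite vI /=; lia.
Qed.

Lemma zbit_majorana_string n (k : 'I_(2 * n)) (j : 'I_n) :
  zbit (majorana_string k j) = (j.*2.+1 <= k)%N.
Proof.
have [vX vY vZ vI] : [/\ val PX = 1, val PY = 2, val PZ = 3 & val PI = 0]%N
  by split; exact: inordK.
have k_eq := odd_double_half k.
rewrite ffunE /zbit; case: ifP => lt_j; first (rewrite vZ /=; lia).
case: ifP => eq_j; last by rewrite vI /=; lia.
by case odd_k: (odd k); rewrite ?vY ?vX /=; rewrite odd_k in k_eq; lia.
Qed.

Lemma jw_string_cons n (k : 'I_(2 * n)) s :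
  jw_string (k :: s) = xor_string (majorana_string k) (jw_string s).
Proof.
apply/ffunP => j; have := xbit_majorana_string k j; have := zbit_majorana_string k j.
rewrite !ffunE /xor_pauli xbit_pauli_xz zbit_pauli_xz => -> ->; rewrite /= !oddD.
by case: (k./2 == j); case: (j.*2.+1 <= k)%N.
Qed.

Lemma majorana_foldr_pauli (R : realType) n (s : seq 'I_(2 * n)) :
  exists2 c : R[i], c != 0 &
    foldr (fun k M => majorana R k *m M) 1%:M s = c *: pauli_mx R (jw_string s).
Proof.
elim: s => [|k s [c c_neq0 IHs]] /=.
  exists 1; first exact: oner_neq0.
  by rewrite scale1r -(pauli_mx_const_I R n); congr (pauli_mx R _).
exists (c * \prod_(j < n) pauli_phase R (majorana_string k j) (jw_string s j)).
  by rewrite mulf_neq0 // prodf_seq_neq0; apply/allP => j _; rewrite pauli_phase_neq0.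
by rewrite IHs -scalemxAr /majorana -/(majorana_string k) pauli_mx_mul scalerA jw_string_cons.
Qed.

Section OrdPairs.
Variable n : nat.

Lemma ord_half_subproof (k : 'I_(2 * n)) : (k./2 < n)%N.
Proof. by have := ltn_ord k; lia. Qed.
Lemma even_ord_subproof (j : 'I_n) : (j.*2 < 2 * n)%N.
Proof. by have := ltn_ord j; lia. Qed.
Lemma odd_ord_subproof (j : 'I_n) : (j.*2.+1 < 2 * n)%N.
Proof. by have := ltn_ord j; lia. Qed.

Definition ord_half (k : 'I_(2 * n)) : 'I_n := Ordinal (ord_half_subproof k).
Definition even_ord (j : 'I_n) : 'I_(2 * n) := Ordinal (even_ord_subproof j).
Definition odd_ord (j : 'I_n) : 'I_(2 * n) := Ordinal (odd_ord_subproof j).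

Lemma ord_half_even j : ord_half (even_ord j) = j.
Proof. by apply: val_inj => /=; lia. Qed.
Lemma ord_half_odd j : ord_half (odd_ord j) = j.
Proof. by apply: val_inj => /=; lia. Qed.
Lemma odd_even_ord j : odd (even_ord j) = false.
Proof. by rewrite /= odd_double. Qed.
Lemma odd_odd_ord j : odd (odd_ord j) = true.
Proof. by rewrite /= odd_double. Qed.

Lemma big_ord_pairs (T : Type) (idx : T) (op : Monoid.com_law idx)
    (F : 'I_(2 * n) -> T) :
  \big[op/idx]_(k : 'I_(2 * n)) F k =
  \big[op/idx]_(j : 'I_n) op (F (even_ord j)) (F (odd_ord j)).
Proof.
pose pair_ord jb := if jb.2 then odd_ord jb.1 else even_ord jb.1.
have pair_bij : bijective pair_ord.
  exists (fun k => (ord_half k, odd k)).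
    by case=> j []; rewrite /pair_ord /= ?ord_half_odd ?ord_half_even ?odd_odd_ord ?odd_even_ord.
  move=> k; apply: val_inj; rewrite /pair_ord.
  by have := odd_double_half k; case: (odd k) => /=; lia.
rewrite (reindex pair_ord) /=; last exact: onW_bij.
rewrite -(pair_bigA op (fun j b => F (pair_ord (j, b)))) /=.
by apply: eq_bigr => j _; rewrite big_bool Monoid.mulmC.
Qed.

End OrdPairs.

Lemma count_enum_set (I : finType) (S : {set I}) (P : pred I) :
  count P (enum S) = (\sum_(k : I) ((k \in S) && P k))%N.
Proof.
rewrite -sum1_count big_enum_cond big_mkcond /=.
by apply: eq_bigr => k _; case: (_ && _).
Qed.

Lemma odd_sum_odd (I : finType) (P : pred I) (F : I -> nat) :
  odd (\sum_(i | P i) F i)%N = odd (\sum_(i | P i) odd (F i))%N.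
Proof.
apply: (big_ind2 (fun a b => odd a = odd b)) => // [x1 x2 y1 y2 e1 e2|i _].
  by rewrite !oddD e1 e2.
by rewrite oddb.
Qed.

Lemma xbit_jw_string n (S : {set 'I_(2 * n)}) (j : 'I_n) :
  xbit (jw_string (enum S) j) = (even_ord j \in S) (+) (odd_ord j \in S).
Proof.
rewrite ffunE xbit_pauli_xz count_enum_set big_ord_pairs /= (bigD1 j) //= big1 ?addn0.
  by rewrite !doubleK uphalf_double eqxx !andbT oddD !oddb.
move=> j' neq_j.
have -> : ((j'.*2)./2 == j) = false by rewrite doubleK; exact: negbTE.
have -> : ((j'.*2.+1)./2 == j) = false.
  by rewrite -[(j'.*2.+1)./2]/(uphalf j'.*2) uphalf_double; exact: negbTE.
by rewrite !andbF.
Qed.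

Lemma zbit_jw_string n (S : {set 'I_(2 * n)}) (j : 'I_n) :
  zbit (jw_string (enum S) j) = (odd_ord j \in S) (+)
    odd (\sum_(j' : 'I_n | (j < j')%N) ((even_ord j' \in S) + (odd_ord j' \in S)))%N.
Proof.
rewrite ffunE zbit_pauli_xz count_enum_set big_ord_pairs /= (bigD1 j) //=.
have -> : (j.*2.+1 <= j.*2)%N = false by lia.
rewrite leqnn andbF andbT add0n oddD oddb; congr (_ (+) odd _).
rewrite big_mkcond [RHS]big_mkcond /=; apply: eq_bigr => j' _.
case: (ltngtP j j') => cmp.
- have -> : j' != j by rewrite neq_ltn cmp orbT.
  have -> : (j.*2.+1 <= j'.*2)%N by lia.
  have -> : (j.*2.+1 <= j'.*2.+1)%N by lia.
  by rewrite !andbT.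
- have -> : (j.*2.+1 <= j'.*2)%N = false by lia.
  have -> : (j.*2.+1 <= j'.*2.+1)%N = false by lia.
  by rewrite !andbF; case: (_ != _).
- by rewrite (_ : j' = j) ?eqxx //; apply: val_inj; rewrite /= cmp.
Qed.

Section JordanWigner.
Variable n : nat.
Implicit Types (p : {ffun 'I_n -> 'I_4}) (S : {set 'I_(2 * n)}).

Definition jw_parity p (j : 'I_n) : bool :=
  odd (\sum_(j' : 'I_n | (j < j')%N) xbit (p j')).

(* Solving [xbit_jw_string] and [zbit_jw_string] for the memberships of [2j] ([b = false])
   and [2j+1] ([b = true]), from the last qubit downwards. *)
Definition jw_bit p (j : 'I_n) (b : bool) : bool :=
  zbit (p j) (+) jw_parity p j (+) (~~ b && xbit (p j)).

Definition jw_support p : {set 'I_(2 * n)} :=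
  [set k | jw_bit p (ord_half k) (odd k)].

Lemma even_ord_jw_support p j : (even_ord j \in jw_support p) = jw_bit p j false.
Proof. by rewrite inE ord_half_even odd_even_ord. Qed.
Lemma odd_ord_jw_support p j : (odd_ord j \in jw_support p) = jw_bit p j true.
Proof. by rewrite inE ord_half_odd odd_odd_ord. Qed.

Lemma jw_string_supportK p : jw_string (enum (jw_support p)) = p.
Proof.
apply/ffunP => j; rewrite -[RHS]pauli_xzK -[LHS]pauli_xzK.
rewrite xbit_jw_string zbit_jw_string odd_sum_odd.
under eq_bigr => j' _ do rewrite oddD !oddb even_ord_jw_support odd_ord_jw_support.
have -> : (\sum_(j' < n | (j < j')%N) (jw_bit p j' false (+) jw_bit p j' true))%N =
          (\sum_(j' < n | (j < j')%N) xbit (p j'))%N.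
  apply: eq_bigr => j' _; rewrite /jw_bit.
  by case: (xbit _); case: (zbit _); case: (jw_parity _ _).
rewrite -/(jw_parity p j) even_ord_jw_support odd_ord_jw_support /jw_bit.
by case: (xbit _); case: (zbit _); case: (jw_parity _ _).
Qed.

Lemma jw_bit_string S (j : 'I_n) b :
  jw_bit (jw_string (enum S)) j b = if b then odd_ord j \in S else even_ord j \in S.
Proof.
rewrite /jw_bit /jw_parity xbit_jw_string zbit_jw_string odd_sum_odd.
rewrite [X in _ (+) X (+) _]odd_sum_odd.
have -> : (\sum_(j' < n | (j < j')%N) odd (xbit (jw_string (enum S) j')))%N =
          (\sum_(j' < n | (j < j')%N) odd ((even_ord j' \in S) + (odd_ord j' \in S)))%N.
  by apply: eq_bigr => j' _; rewrite xbit_jw_string oddD !oddb.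
by case: b; case: (even_ord j \in S); case: (odd_ord j \in S); case: (odd _).
Qed.

Lemma jw_support_stringK S : jw_support (jw_string (enum S)) = S.
Proof.
apply/setP => k; rewrite inE jw_bit_string.
have := odd_double_half k.
by case: (odd k) => k_eq; congr (_ \in S); apply: val_inj => /=; lia.
Qed.

Definition jw_degree p (j : 'I_n) : nat :=
  if xbit (p j) then 1%N else ((zbit (p j) (+) jw_parity p j) : nat).*2.

Lemma card_jw_support p : #|jw_support p| = (\sum_(j : 'I_n) jw_degree p j)%N.
Proof.
rewrite -sum1_card big_mkcond /= big_ord_pairs /=; apply: eq_bigr => j _.
rewrite even_ord_jw_support odd_ord_jw_support /jw_degree /jw_bit.
by case: (xbit _); case: (zbit _); case: (jw_parity _ _).
Qed.

Lemma in_L_pauli (R : realType) alpha p :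
  in_L alpha (pauli_mx R p) <-> #|jw_support p| = alpha.
Proof.
split=> [[a pE]|card_alpha].
  apply/eqP; apply: contraT => card_neq.
  suff : \tr (pauli_mx R p *m pauli_mx R p) = 0.
    by rewrite mxtrace_pauli_mul eqxx => /eqP; rewrite expf_eq0 pnatr_eq0 andbF.
  rewrite [X in _ *m X]pE mulmx_sumr raddf_sum /=; apply: big1 => S /eqP card_S.
  have [c _ cE] := majorana_foldr_pauli R (enum S).
  rewrite -scalemxAr mxtraceZ /majorana_prod cE -scalemxAr mxtraceZ mxtrace_pauli_mul.
  case: eqP => [p_eq|]; last by rewrite !mulr0.
  by move: card_neq; rewrite p_eq jw_support_stringK card_S eqxx.
have [c c_neq0 cE] := majorana_foldr_pauli R (enum (jw_support p)).
exists (fun S => if S == jw_support p then c^-1 else 0).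
rewrite (bigD1 (jw_support p)) /=; last by rewrite card_alpha.
rewrite eqxx big1 ?addr0 => [|S /andP[_ /negbTE ->]]; last by rewrite scale0r.
by rewrite /majorana_prod cE jw_string_supportK scalerA mulVf // scale1r.
Qed.

End JordanWigner.

(** * Block structure of the state *)

Section Blocks.
Variable m : nat.

Lemma block_idx_subproof (b : 'I_m) (t : 'I_4) : (4 * b + t < m * 4)%N.
Proof. by have := ltn_ord b; have := ltn_ord t; lia. Qed.
Lemma block_of_subproof (j : 'I_(m * 4)) : (j %/ 4 < m)%N.
Proof. by have := ltn_ord j; lia. Qed.

Definition block_idx (b : 'I_m) (t : 'I_4) : 'I_(m * 4) := Ordinal (block_idx_subproof b t).
Definition block_of (j : 'I_(m * 4)) : 'I_m := Ordinal (block_of_subproof j).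
Definition block_pos (j : 'I_(m * 4)) : 'I_4 := Ordinal (ltn_pmod j (isT : 0 < 4)%N).

Lemma block_of_idx b t : block_of (block_idx b t) = b.
Proof. by apply: val_inj => /=; have := ltn_ord t; lia. Qed.
Lemma block_pos_idx b t : block_pos (block_idx b t) = t.
Proof. by apply: val_inj => /=; have := ltn_ord t; lia. Qed.
Lemma block_idxK j : block_idx (block_of j) (block_pos j) = j.
Proof. by apply: val_inj => /=; lia. Qed.

Lemma big_ord_blocks (T : Type) (idx : T) (op : Monoid.com_law idx)
    (F : 'I_(m * 4) -> T) :
  \big[op/idx]_(j : 'I_(m * 4)) F j =
  \big[op/idx]_(b : 'I_m) \big[op/idx]_(t : 'I_4) F (block_idx b t).
Proof.
rewrite pair_bigA /= (reindex (fun bt : 'I_m * 'I_4 => block_idx bt.1 bt.2)) //.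
apply: onW_bij; exists (fun j => (block_of j, block_pos j)) => [[b t]|j] /=.
  by rewrite block_of_idx block_pos_idx.
by rewrite block_idxK.
Qed.

Definition flatten_blocks (T : Type) (h : {ffun 'I_m -> {ffun 'I_4 -> T}}) :
  {ffun 'I_(m * 4) -> T} := [ffun j => h (block_of j) (block_pos j)].

Lemma flatten_blocksE T h b t : @flatten_blocks T h (block_idx b t) = h b t.
Proof. by rewrite ffunE block_of_idx block_pos_idx. Qed.

Lemma flatten_blocks_row T h b : [ffun t => @flatten_blocks T h (block_idx b t)] = h b.
Proof. by apply/ffunP => t; rewrite ffunE flatten_blocksE. Qed.

Lemma big_flatten_blocks (T : finType) (U : Type) (idx : U) (op : Monoid.com_law idx)
    (F : {ffun 'I_(m * 4) -> T} -> U) :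
  \big[op/idx]_(f : {ffun 'I_(m * 4) -> T}) F f =
  \big[op/idx]_(h : {ffun 'I_m -> {ffun 'I_4 -> T}}) F (flatten_blocks h).
Proof.
rewrite (reindex (@flatten_blocks T)) //; apply: onW_bij.
pose unflatten (f : {ffun 'I_(m * 4) -> T}) : {ffun 'I_m -> {ffun 'I_4 -> T}} :=
  [ffun b => [ffun t => f (block_idx b t)]].
exists unflatten => [h|f].
  by apply/ffunP => b; rewrite ffunE flatten_blocks_row.
by apply/ffunP => j; rewrite !ffunE block_idxK.
Qed.

End Blocks.

Lemma eq_ffun4 (T : Type) (v w : {ffun 'I_4 -> T}) :
  v pI = w pI -> v pX = w pX -> v pY = w pY -> v pZ = w pZ -> v = w.
Proof.
move=> eI eX eY eZ; apply/ffunP => -[[|[|[|[|t]]]] lt_t] //.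
- by rewrite (_ : Ordinal _ = pI) //; apply: val_inj.
- by rewrite (_ : Ordinal _ = pX) //; apply: val_inj.
- by rewrite (_ : Ordinal _ = pY) //; apply: val_inj.
- by rewrite (_ : Ordinal _ = pZ) //; apply: val_inj.
Qed.

Section Expectation.
Variable R : realType.
Variable g : R.
Local Notation C := R[i].

Definition ghz_amp (u : bool) : C := (if u then sin (g / 4) else cos (g / 4))%:C.

Definition ghz_entry (q : {ffun 'I_4 -> 'I_4}) (u u' : bool) : C :=
  \prod_(t : 'I_4) pauli1 R (q t) u u'.

Definition block_expect (q : {ffun 'I_4 -> 'I_4}) : C :=
  \sum_(u : bool) \sum_(u' : bool) ghz_amp u * ghz_amp u' * ghz_entry q u u'.

Definition block_amp4 (v : {ffun 'I_4 -> bool}) : R :=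
  block_amp g (v pI) (v pX) (v pY) (v pZ).

Definition const4 (b : bool) : {ffun 'I_4 -> bool} := [ffun _ => b].

Lemma sum_block_amp4 (G : {ffun 'I_4 -> bool} -> C) :
  \sum_(v : {ffun 'I_4 -> bool}) G v * (block_amp4 v)%:C =
  G (const4 false) * ghz_amp false + G (const4 true) * ghz_amp true.
Proof.
have const4_neq : const4 true != const4 false.
  by apply/eqP => /ffunP /(_ pI); rewrite !ffunE.
rewrite (bigD1 (const4 false)) //= (bigD1 (const4 true)) //= big1 ?addr0.
  by rewrite /block_amp4 /block_amp !ffunE.
move=> v /andP[neq0 neq1]; rewrite /block_amp4 /block_amp.
case: ifP => [/andP[/andP[/andP[vI vX] vY] vZ]|_].
  by move: neq0; rewrite (@eq_ffun4 _ v (const4 false)) ?eqxx // ffunE; apply/negbTE.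
case: ifP => [/andP[/andP[/andP[vI vX] vY] vZ]|_]; last by rewrite mulr0.
by move: neq1; rewrite (@eq_ffun4 _ v (const4 true)) ?eqxx // ffunE.
Qed.

Definition chi_amp m (v : {ffun 'I_(m * 4) -> bool}) : R :=
  \prod_(b < m) block_amp4 [ffun t => v (block_idx b t)].

Lemma rhoE m (r c : 'I_(2 ^ (m * 4))) :
  rho (m * 4) g r c = (chi_amp (qubits r))%:C * (chi_amp (qubits c))%:C.
Proof.
have chiE (x : 'I_(2 ^ (m * 4))) :
    \prod_(b < m * 4 %/ 4) block_amp g (qbit (m * 4) (4 * b) x)
      (qbit (m * 4) (4 * b + 1) x) (qbit (m * 4) (4 * b + 2) x)
      (qbit (m * 4) (4 * b + 3) x) = chi_amp (qubits x).
  rewrite mulnK // -(big_mkord xpredT (fun b => block_amp g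
    (qbit (m * 4) (4 * b) x) (qbit (m * 4) (4 * b + 1) x)
    (qbit (m * 4) (4 * b + 2) x) (qbit (m * 4) (4 * b + 3) x))).
  by rewrite big_mkord; apply: eq_bigr => b _; rewrite /block_amp4 !ffunE /= addn0.
by rewrite /rho mxE big_ord1 !mxE !chiE /conjc /= oppr0.
Qed.

Lemma block_expectE (q : {ffun 'I_4 -> 'I_4}) :
  \sum_(v : {ffun 'I_4 -> bool}) \sum_(w : {ffun 'I_4 -> bool})
     (\prod_(t : 'I_4) pauli1 R (q t) (v t) (w t)) *
     ((block_amp4 v)%:C * (block_amp4 w)%:C)
  = block_expect q.
Proof.
set P := fun v w : {ffun 'I_4 -> bool} => \prod_(t : 'I_4) pauli1 R (q t) (v t) (w t).
transitivity (\sum_(v : {ffun 'I_4 -> bool})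
   (P v (const4 false) * ghz_amp false + P v (const4 true) * ghz_amp true) *
   (block_amp4 v)%:C).
  apply: eq_bigr => v _; under eq_bigr => w _ do rewrite mulrA.
  by rewrite (sum_block_amp4 (fun w => P v w * (block_amp4 v)%:C)) /=; ring.
rewrite sum_block_amp4 /block_expect !big_bool /= /ghz_entry /P.
have const4E u u' : \prod_(t : 'I_4) pauli1 R (q t) (const4 u t) (const4 u' t) =
                    \prod_(t : 'I_4) pauli1 R (q t) u u'.
  by apply: eq_bigr => t _; rewrite !ffunE.
by rewrite !const4E; ring.
Qed.

Lemma mxtrace_pauli_rho m (h : {ffun 'I_m -> {ffun 'I_4 -> 'I_4}}) :
  \tr (pauli_mx R (flatten_blocks h) *m rho (m * 4) g) =
  \prod_(b < m) block_expect (h b).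
Proof.
pose K (b : 'I_m) (v w : {ffun 'I_4 -> bool}) :=
  (\prod_(t : 'I_4) pauli1 R (h b t) (v t) (w t)) *
  ((block_amp4 v)%:C * (block_amp4 w)%:C).
transitivity (\sum_(v : {ffun 'I_(m * 4) -> bool}) \sum_(w : {ffun 'I_(m * 4) -> bool})
  (\prod_(j < m * 4) pauli1 R (flatten_blocks h j) (v j) (w j)) *
  ((chi_amp v)%:C * (chi_amp w)%:C)).
  pose T (v w : {ffun 'I_(m * 4) -> bool}) :=
    (\prod_(j < m * 4) pauli1 R (flatten_blocks h j) (v j) (w j)) *
    ((chi_amp v)%:C * (chi_amp w)%:C).
  rewrite /mxtrace -(sum_qubits (fun v => \sum_w T v w)); apply: eq_bigr => r _.
  rewrite mxE -(sum_qubits (T (qubits r))); apply: eq_bigr => c _.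
  by rewrite pauli_mxE rhoE /T [X in _ * X]mulrC.
rewrite big_flatten_blocks; under eq_bigr => V _ do rewrite big_flatten_blocks.
transitivity (\sum_(V : {ffun 'I_m -> {ffun 'I_4 -> bool}})
   \sum_(W : {ffun 'I_m -> {ffun 'I_4 -> bool}}) \prod_(b < m) K b (V b) (W b)).
  apply: eq_bigr => V _; apply: eq_bigr => W _.
  rewrite /K !big_split /= /chi_amp !rmorph_prod big_ord_blocks.
  congr (_ * (_ * _)); apply: eq_bigr => b _; rewrite ?flatten_blocks_row //.
  by apply: eq_bigr => t _; rewrite !flatten_blocksE.
transitivity (\prod_(b < m) \sum_(v : {ffun 'I_4 -> bool})
                \sum_(w : {ffun 'I_4 -> bool}) K b v w).
  rewrite bigA_distr_bigA /=; apply: eq_bigr => V _.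
  by rewrite bigA_distr_bigA.
by apply: eq_bigr => b _; exact: block_expectE.
Qed.

End Expectation.

Definition qubit_deg (a : 'I_4) : nat := if xbit a then 1%N else (zbit a : nat).*2.
Definition block_deg (q : {ffun 'I_4 -> 'I_4}) : nat := (\sum_(t : 'I_4) qubit_deg (q t))%N.
Definition xbit_const (q : {ffun 'I_4 -> 'I_4}) : bool :=
  [forall t, xbit (q t)] || [forall t, ~~ xbit (q t)].

Section BlockDegree.
Variables (m : nat) (h : {ffun 'I_m -> {ffun 'I_4 -> 'I_4}}).
Hypothesis h_const : forall b, xbit_const (h b).

(* Each block contributes 0 or 4 to the parity, so the Jordan-Wigner string of an
   identity/Z qubit is trivial. *)
Lemma jw_parity_flatten b t :
  ~~ xbit (h b t) -> jw_parity (flatten_blocks h) (block_idx b t) = false.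
Proof.
move=> xbit_bt; rewrite /jw_parity big_mkcond big_ord_blocks /= odd_sum_odd big1 //.
move=> b' _.
have block_b t' : xbit (h b t') = false.
  case/orP: (h_const b) => /forallP all_b; first by move: xbit_bt; rewrite all_b.
  exact/negbTE/all_b.
pose c := if (block_idx b t < block_idx b' pI)%N
          then (xbit (flatten_blocks h (block_idx b' pI)) : nat) else 0%N.
rewrite (eq_bigr (fun _ => c)) => [|t' _]; first by rewrite sum_nat_const card_ord oddM.
rewrite /c !flatten_blocksE.
case: (ltngtP b b') => cmp_b.
- have -> : (block_idx b t < block_idx b' t')%N by rewrite /=; have := ltn_ord t; lia.
  have -> : (block_idx b t < block_idx b' pI)%N by rewrite /=; have := ltn_ord t; lia.
  by case/orP: (h_const b') => /forallP all_b'; rewrite ?all_b' ?(negbTE (all_b' _)).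
- have -> : (block_idx b t < block_idx b' t')%N = false by rewrite /=; have := ltn_ord t'; lia.
  by have -> : (block_idx b t < block_idx b' pI)%N = false by rewrite /=; lia.
- have -> : b' = b by apply: val_inj.
  by rewrite !block_b; case: ifP; case: ifP.
Qed.

Lemma card_jw_support_flatten :
  #|jw_support (flatten_blocks h)| = (\sum_(b < m) block_deg (h b))%N.
Proof.
rewrite card_jw_support big_ord_blocks; apply: eq_bigr => b _.
apply: eq_bigr => t _; rewrite /jw_degree /qubit_deg flatten_blocksE.
by case xbit_bt: (xbit (h b t)) => //; rewrite jw_parity_flatten ?xbit_bt // addbF.
Qed.

End BlockDegree.

Section ExpectationSupport.
Variables (R : realType) (g : R).
Local Notation C := R[i].

Lemma pauli1_diag_xbit a u : xbit a -> pauli1 R a u u = 0.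
Proof. by case: a => [[|[|[|[|?]]]] ?] //; case: u. Qed.

Lemma pauli1_offdiag_xbitN a u : ~~ xbit a -> pauli1 R a u (~~ u) = 0.
Proof. by case: a => [[|[|[|[|?]]]] ?] //; case: u. Qed.

Lemma block_expect_xbit_const q : block_expect g q != 0 -> xbit_const q.
Proof.
apply: contraR; rewrite /xbit_const negb_or !negb_forall.
case/andP=> /existsP[t1 xbit_t1] /existsP[t2]; rewrite negbK => xbit_t2.
have diag0 u : ghz_entry R q u u = 0.
  by rewrite /ghz_entry (bigD1 t2) //= pauli1_diag_xbit // mul0r.
have offdiag0 u : ghz_entry R q u (~~ u) = 0.
  by rewrite /ghz_entry (bigD1 t1) //= pauli1_offdiag_xbitN // mul0r.
by rewrite /block_expect !big_bool /= !diag0 (offdiag0 true) (offdiag0 false) !mulr0 !addr0.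
Qed.

Lemma P_alpha_rho_blocks m alpha :
  P_alpha alpha (rho (m * 4) g) =
  ((2 ^+ (m * 4) : R)^-1)%:C *
  \sum_(h : {ffun 'I_m -> {ffun 'I_4 -> 'I_4}})
     (if (\sum_(b < m) block_deg (h b))%N == alpha
      then \prod_(b < m) block_expect g (h b) ^+ 2 else 0).
Proof.
rewrite /P_alpha (eq_bigl (fun p => #|jw_support p| == alpha)) => [|p]; last first.
  by apply/asboolP/eqP; rewrite in_L_pauli.
rewrite big_mkcond big_flatten_blocks mulr_sumr; apply: eq_bigr => h _.
rewrite /basis_el -scalemxAl mxtraceZ mxtrace_pauli_rho exprMn -rmorphXn exprVn.
rewrite sqr_sqrtr ?exprn_ge0 // prodrXl.
have [->|prod_neq0] := eqVneq (\prod_(b < m) block_expect g (h b)) 0.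
  by rewrite expr0n mulr0; case: ifP; case: ifP; rewrite ?mulr0.
rewrite card_jw_support_flatten; first by case: ifP; rewrite ?mulr0.
move=> b; apply: block_expect_xbit_const; apply: contra prod_neq0 => /eqP expect0.
by rewrite (bigD1 b) //= expect0 mul0r.
Qed.

End ExpectationSupport.

(** * The generating polynomial *)

Lemma sum_ord4 (V : nmodType) (F : 'I_4 -> V) :
  \sum_(a : 'I_4) F a = F pI + F pX + F pY + F pZ.
Proof.
rewrite !big_ord_recl big_ord0 addr0 !addrA.
by congr (F _ + F _ + F _ + F _); apply: val_inj.
Qed.

Lemma sum_pair (A B : finType) (V : nmodType) (F : A * B -> V) :
  \sum_(p : A * B) F p = \sum_(a : A) \sum_(b : B) F (a, b).
Proof. by rewrite pair_bigA; apply: eq_bigr => -[a b]. Qed.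

Section BlockPolynomial.
Variables (R : realType) (g : R).
Local Notation C := R[i].

Definition qubit_poly (u1 u1' u2 u2' : bool) : {poly C} :=
  \sum_(a : 'I_4) (pauli1 R a u1 u1' * pauli1 R a u2 u2')%:P * 'X^(qubit_deg a).

Lemma qubit_polyE u1 u1' u2 u2' : qubit_poly u1 u1' u2 u2' =
  ((u1 == u1') && (u2 == u2'))%:R +
  ((u1 != u1') && (u2 != u2') && (u1 != u2))%:R *+ 2 * 'X +
  ((u1 == u1') && (u2 == u2'))%:R * (-1) ^+ (u1 != u2) * 'X^2.
Proof.
rewrite -!polyC_natr -polyCMn -polyC1 -polyCN -polyC_exp -polyCM.
rewrite /qubit_poly sum_ord4 /qubit_deg /= expr0 expr1 mulr1.
rewrite -[X in X + _ = _]addrA -mulrDl -polyCD.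
congr (_%:P + _%:P * _ + _%:P * _);
  by case: u1; case: u1'; case: u2; case: u2'; rewrite /pauli1 /=;
    apply/eqP; rewrite eq_complex /=; apply/andP; split; apply/eqP; ring.
Qed.

Definition block_poly : {poly C} :=
  \sum_(q : {ffun 'I_4 -> 'I_4}) block_expect g q ^+ 2 *: 'X^(block_deg q).

Lemma block_expect_sqr q : block_expect g q ^+ 2 =
  \sum_(U : (bool * bool) * (bool * bool))
    ghz_amp g U.1.1 * ghz_amp g U.1.2 * (ghz_amp g U.2.1 * ghz_amp g U.2.2) *
    \prod_(t : 'I_4) (pauli1 R (q t) U.1.1 U.1.2 * pauli1 R (q t) U.2.1 U.2.2).
Proof.
rewrite expr2 /block_expect.
pose F (p : bool * bool) := ghz_amp g p.1 * ghz_amp g p.2 * ghz_entry R q p.1 p.2.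
rewrite (pair_bigA _ (fun u u' => F (u, u'))) /=.
transitivity (\sum_(x : bool * bool) \sum_(y : bool * bool) F x * F y).
  by rewrite mulr_suml; apply: eq_bigr => x _; rewrite mulr_sumr.
rewrite pair_bigA /=; apply: eq_bigr => U _.
by rewrite /F /ghz_entry big_split /=; ring.
Qed.

Lemma block_poly_qubit_poly : block_poly =
  \sum_(U : (bool * bool) * (bool * bool))
    (ghz_amp g U.1.1 * ghz_amp g U.1.2 * (ghz_amp g U.2.1 * ghz_amp g U.2.2)) *:
    qubit_poly U.1.1 U.1.2 U.2.1 U.2.2 ^+ 4.
Proof.
rewrite /block_poly; under eq_bigr => q _ do rewrite block_expect_sqr scaler_suml.
rewrite exchange_big /=; apply: eq_bigr => U _.
under eq_bigr => q _ do rewrite -scalerA.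
rewrite -scaler_sumr; congr (_ *: _).
pose T (a : 'I_4) := (pauli1 R a U.1.1 U.1.2 * pauli1 R a U.2.1 U.2.2)%:P * 'X^(qubit_deg a).
transitivity (\sum_(q : {ffun 'I_4 -> 'I_4}) \prod_(t : 'I_4) T (q t)).
  apply: eq_bigr => q _.
  by rewrite /block_deg expr_sum -mul_polyC rmorph_prod -big_split.
by rewrite -(bigA_distr_bigA (fun _ => T)) prodr_const card_ord.
Qed.

Lemma N_cos_sin : let c := cos (g / 4) in let s := sin (g / 4) in
  [/\ N2 g = 4 * (c ^+ 2 - s ^+ 2) ^+ 2,
      N4 g = 6 * (c ^+ 2 + s ^+ 2) ^+ 2 + 32 * (c ^+ 2 * s ^+ 2),
      N6 g = 4 * (c ^+ 2 - s ^+ 2) ^+ 2 & (c ^+ 2 + s ^+ 2) ^+ 2 = 1].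
Proof.
move=> c s.
have half_g : g / 2 = (g / 4) *+ 2 by rewrite mulr2n; field.
have c2s2 : c ^+ 2 + s ^+ 2 = 1 by exact: cos2Dsin2.
have cos_half : cos (g / 2) = c ^+ 2 - s ^+ 2.
  by rewrite half_g cos_mulr2n -/c mulr2n; nra.
have sin_half : sin (g / 2) = (c * s) *+ 2 by rewrite half_g sin_mulr2n.
rewrite /N2 /N4 /N6 cos_half sin_half c2s2 expr1n; split => //.
by rewrite mulr2n; nra.
Qed.

Lemma block_polyE : block_poly =
  1 + ((N2 g)%:C%:P * 'X^2 + ((N4 g)%:C%:P * 'X^4 + ((N6 g)%:C%:P * 'X^6 + 'X^8))).
Proof.
have [-> -> -> c2s2] := N_cos_sin.
set c := cos (g / 4) in c2s2 *; set s := sin (g / 4) in c2s2 *.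
transitivity (((c ^+ 2 + s ^+ 2) ^+ 2)%:C%:P +
  ((4 * (c ^+ 2 - s ^+ 2) ^+ 2)%:C%:P * 'X^2 +
  ((6 * (c ^+ 2 + s ^+ 2) ^+ 2 + 32 * (c ^+ 2 * s ^+ 2))%:C%:P * 'X^4 +
  ((4 * (c ^+ 2 - s ^+ 2) ^+ 2)%:C%:P * 'X^6 + ((c ^+ 2 + s ^+ 2) ^+ 2)%:C%:P * 'X^8)))).
  rewrite block_poly_qubit_poly sum_pair sum_pair.
  under eq_bigr => a _ do under eq_bigr => b _ do rewrite sum_pair.
  rewrite !big_bool /= !qubit_polyE /= -!mul_polyC /ghz_amp -/c -/s.
  ring.
by rewrite c2s2 rmorph1 mul1r.
Qed.

End BlockPolynomial.

Section GeneratingPolynomial.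
Variable K : comNzRingType.

Lemma prod_scale_Xn (I : finType) (a : I -> K) (k : I -> nat) :
  \prod_(i : I) (a i *: 'X^(k i)) = (\prod_(i : I) a i) *: 'X^(\sum_(i : I) k i)%N.
Proof.
rewrite -mul_polyC rmorph_prod -prodrXr -big_split /=.
by apply: eq_bigr => i _; rewrite mul_polyC.
Qed.

Lemma coef_gen_poly_exp (Q : finType) m alpha (F : Q -> K) (d : Q -> nat) :
  \sum_(h : {ffun 'I_m -> Q})
     (if (\sum_(b < m) d (h b))%N == alpha then \prod_(b < m) F (h b) else 0) =
  ((\sum_(q : Q) F q *: 'X^(d q)) ^+ m)`_alpha.
Proof.
rewrite -[m in _ ^+ m]card_ord -prodr_const bigA_distr_bigA coef_sum.
apply: eq_bigr => h _; rewrite prod_scale_Xn coefZ coefXn eq_sym.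
by case: eqP; rewrite ?mulr1 ?mulr0.
Qed.

Lemma exprD_widen (a b : K) k B : (k < B)%N ->
  (a + b) ^+ k = \sum_(i < B) (a ^+ i * b ^+ (k - i)) *+ 'C(k, i).
Proof.
move=> lt_kB; rewrite addrC exprDn.
rewrite (big_ord_widen B (fun i => b ^+ (k - i) * a ^+ i *+ 'C(k, i))) //.
rewrite big_mkcond /=; apply: eq_bigr => i _.
by case: ifP => [_|/negbT]; [rewrite mulrC | rewrite -leqNgt => /bin_small ->].
Qed.

End GeneratingPolynomial.

Definition multinom (m i0 i2 i4 i6 : nat) : nat :=
  'C(m, i0) * 'C(m - i0, i2) * 'C(m - i0 - i2, i4) * 'C(m - i0 - i2 - i4, i6).

Lemma exprD5_multinom (A : comNzRingType) (x0 x1 x2 x3 x4 : A) m :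
  (x0 + (x1 + (x2 + (x3 + x4)))) ^+ m =
  \sum_(i0 < m.+1) \sum_(i2 < m.+1) \sum_(i4 < m.+1) \sum_(i6 < m.+1)
    (x0 ^+ i0 * (x1 ^+ i2 * (x2 ^+ i4 * (x3 ^+ i6 * x4 ^+ (m - i0 - i2 - i4 - i6)))))
      *+ multinom m i0 i2 i4 i6.
Proof.
rewrite (exprD_widen _ _ (ltnSn m)); apply: eq_bigr => i0 _.
rewrite (@exprD_widen _ _ _ (m - i0) m.+1) ?ltnS ?leq_subr //.
rewrite mulr_sumr -sumrMnl; apply: eq_bigr => i2 _.
rewrite (@exprD_widen _ _ _ (m - i0 - i2) m.+1); last by lia.
rewrite mulr_sumr -sumrMnl mulr_sumr -sumrMnl; apply: eq_bigr => i4 _.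
rewrite (@exprD_widen _ _ _ (m - i0 - i2 - i4) m.+1); last by lia.
rewrite mulr_sumr -sumrMnl mulr_sumr -sumrMnl mulr_sumr -sumrMnl.
apply: eq_bigr => i6 _.
by rewrite !mulrnAr -!mulrnA /multinom; congr (_ *+ _); ring.
Qed.

Lemma multinom_fact m i0 i2 i4 i6 : (i0 + i2 + i4 + i6 <= m)%N ->
  (multinom m i0 i2 i4 i6 *
   (i0`! * i2`! * i4`! * i6`! * (m - i0 - i2 - i4 - i6)`!))%N = m`!.
Proof.
move=> le_m.
have f0 := @bin_fact m i0 ltac:(lia).
have f2 := @bin_fact (m - i0) i2 ltac:(lia).
have f4 := @bin_fact (m - i0 - i2) i4 ltac:(lia).
have f6 := @bin_fact (m - i0 - i2 - i4) i6 ltac:(lia).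
by rewrite -f0 -f2 -f4 -f6 /multinom; ring.
Qed.

Lemma multinom_small m i0 i2 i4 i6 :
  (m < i0 + i2 + i4 + i6)%N -> multinom m i0 i2 i4 i6 = 0%N.
Proof.
move=> lt_m; rewrite /multinom.
case: (ltnP m i0) => [/bin_small -> //|le0]; rewrite ?mul0n //.
case: (ltnP (m - i0) i2) => [/bin_small ->|le2]; first by rewrite muln0 !mul0n.
case: (ltnP (m - i0 - i2) i4) => [/bin_small ->|le4]; first by rewrite muln0 !mul0n.
by rewrite (@bin_small (m - i0 - i2 - i4) i6) ?muln0 //; lia.
Qed.

Section MultinomialCoef.
Variable K : numFieldType.

Lemma sum_ord_eq_sub m a alpha (W : nat -> nat) (T : nat -> K) :
  \sum_(i < m.+1 | (a + i == m)%N && (W i == alpha)) T i =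
  if (a <= m)%N then (if W (m - a)%N == alpha then T (m - a)%N else 0) else 0.
Proof.
case: (leqP a m) => [le_am|lt_ma]; last by apply: big1 => i /andP[/eqP]; lia.
have lt_sub : (m - a < m.+1)%N by lia.
rewrite big_mkcond (bigD1 (Ordinal lt_sub)) //= big1 ?addr0.
  by have -> : (a + (m - a) == m)%N by apply/eqP; lia.
move=> i neq_i; have -> : (a + i == m)%N = false => //.
by apply/negbTE; apply: contra neq_i => /eqP eq_m; apply/eqP/val_inj => /=; lia.
Qed.

Lemma coef_exprD5 m alpha (a2 a4 a6 : K) :
  ((1 + (a2%:P * 'X^2 + (a4%:P * 'X^4 + (a6%:P * 'X^6 + 'X^8)))) ^+ m)`_alpha =
  \sum_(i0 < m.+1) \sum_(i2 < m.+1) \sum_(i4 < m.+1) \sum_(i6 < m.+1)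
  \sum_(i8 < m.+1 | (i0 + i2 + i4 + i6 + i8 == m)%N &&
                    (2 * i2 + 4 * i4 + 6 * i6 + 8 * i8 == alpha)%N)
     ((m`!)%:R / ((i0`! * i2`! * i4`! * i6`! * i8`!)%N)%:R
      * a2 ^+ i2 * a4 ^+ i4 * a6 ^+ i6 * 1 ^+ i8).
Proof.
rewrite exprD5_multinom !coef_sum; apply: eq_bigr => i0 _.
rewrite coef_sum; apply: eq_bigr => i2 _.
rewrite coef_sum; apply: eq_bigr => i4 _.
rewrite coef_sum; apply: eq_bigr => i6 _.
rewrite (sum_ord_eq_sub m (i0 + i2 + i4 + i6) alpha
  (fun i8 => 2 * i2 + 4 * i4 + 6 * i6 + 8 * i8)%N
  (fun i8 => (m`!)%:R / ((i0`! * i2`! * i4`! * i6`! * i8`!)%N)%:R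
      * a2 ^+ i2 * a4 ^+ i4 * a6 ^+ i6 * 1 ^+ i8)).
have monomialE : 1 ^+ i0 * ((a2%:P * 'X^2) ^+ i2 * ((a4%:P * 'X^4) ^+ i4 *
    ((a6%:P * 'X^6) ^+ i6 * 'X^8 ^+ (m - i0 - i2 - i4 - i6)))) =
  (a2 ^+ i2 * a4 ^+ i4 * a6 ^+ i6)%:P *
  'X^(2 * i2 + 4 * i4 + 6 * i6 + 8 * (m - i0 - i2 - i4 - i6)).
  by rewrite expr1n mul1r !exprMn -!rmorphXn !exprD !rmorphM; ring.
rewrite coefMn monomialE coefCM coefXn.
case: (leqP (i0 + i2 + i4 + i6) m) => [le_m|lt_m]; last by rewrite multinom_small.
have -> : (m - i0 - i2 - i4 - i6 = m - (i0 + i2 + i4 + i6))%N by lia.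
rewrite eq_sym; case: eqP => _; last by rewrite mulr0 mul0rn.
rewrite mulr1 expr1n mulr1 -mulr_natl -(multinom_fact le_m).
have -> : (m - i0 - i2 - i4 - i6 = m - (i0 + i2 + i4 + i6))%N by lia.
rewrite natrM mulr1 mulfK; last by rewrite pnatr_eq0 -!lt0n !muln_gt0 !fact_gt0.
by rewrite -mulr_natl; ring.
Qed.

End MultinomialCoef.

Lemma P_alpha_rho (R : realType) (m : nat) (g : R) (alpha : nat) :
  P_alpha alpha (rho (m * 4) g) = (P_formula (m * 4) alpha g)%:C.
Proof.
rewrite P_alpha_rho_blocks (coef_gen_poly_exp _ _ (fun q => block_expect g q ^+ 2) block_deg).
rewrite -/(block_poly g) block_polyE coef_exprD5 /P_formula mulnK //.
rewrite [in RHS]rmorphM /=; congr (_ * _).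
do 5!(rewrite rmorph_sum; apply: eq_bigr => ? _).
do 5!rewrite [in RHS]rmorphM.
by rewrite fmorphV !rmorph_nat !rmorphXn rmorph1.
Qed.

Theorem mainTheorem10 (R : realType) (n : nat) (g : R) (alpha : nat) :
  (0 < n)%N -> (4 %| n)%N -> (alpha <= 2 * n)%N ->
  P_alpha alpha (rho n g) = (P_formula n alpha g)%:C /\
  (odd alpha -> P_alpha alpha (rho n g) = 0).
Proof.
(* The formula holds for every n divisible by 4 and every alpha (both sides vanish for
   alpha > 2n). *)
move=> _ /dvdnP [m ->] _; split=> [|odd_alpha]; first exact: P_alpha_rho.
rewrite P_alpha_rho /P_formula /=.
do 4!(rewrite big1 ?mulr0 ?rmorph0 // => ? _).
rewrite big1 // => i8 /andP[_ /eqP alphaE].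
by move: odd_alpha; rewrite -alphaE; lia.
Qed.
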